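(* Let $G$ be a finite weakly minmax group and let $N$ be a normal subgroup of $G$ which is an intersection of maximal subgroups of $G$. Then $G/N$ is weakly minmax.
   Context: A subgroup of $G$ is a maximal intersection if it is an intersection of finitely many (at least one) maximal subgroups of $G$; $\mathcal M(G)$ is the poset under inclusion consisting of $G$ and all maximal intersections in $G$. An unrefinable chain in $\mathcal M(G)$ is a chain $K_t<\dots<K_0$ of elements of $\mathcal M(G)$ to which no further element of $\mathcal M(G)$ can be added; its length is $t$. $\mathrm{MinInt}(G)$ and $\mathrm{MaxInt}(G)$ are the minimal and maximal lengths of unrefinable chains in $\mathcal M(G)$. $\alpha(G)$ is the smallest cardinality of a family of maximal subgroups of $G$ whose intersection equals the Frattini subgroup $\Phi(G)$. $G$ is weakly minmax if $\mathrm{MinInt}(G)=\mathrm{MaxInt}(G)=\alpha(G)$. *)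

From mathcomp Require Import all_boot all_fingroup all_solvable.
Set Implicit Arguments. Unset Strict Implicit. Unset Printing Implicit Defensive.
Local Open Scope group_scope.

Section MaxInt.
Variable gT : finGroupType.
Implicit Types A H : {set gT}.

Definition maxint A H : bool :=
  [exists S : {set {set gT}},
     [&& S != set0, [forall M in S, maximal M A] & H == \bigcap_(M in S) M]].

Definition Mposet A : {set {set gT}} := [set H | (H == A) || maxint A H].

Definition Mchain A (C : {set {set gT}}) : bool :=
  (C \subset Mposet A) &&
  [forall H in C, forall K in C, (H \subset K) || (K \subset H)].

Definition unrefinable A (C : {set {set gT}}) : bool :=
  Mchain A C &&
  [forall H in Mposet A,
     [forall K in C, (H \subset K) || (K \subset H)] ==> (H \in C)].

Definition chain_length (C : {set {set gT}}) : nat := (#|C|).-1.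

(* Min/max lengths of unrefinable chains (there is always at least one
   unrefinable chain, and every length is < #|{set gT}|). *)
Definition MinInt A : nat :=
  \big[minn/#|{set gT}|]_(C : {set {set gT}} | unrefinable A C) chain_length C.
Definition MaxInt A : nat :=
  \max_(C : {set {set gT}} | unrefinable A C) chain_length C.

(* alpha(A): smallest size of a family of maximal subgroups of A whose
   intersection is the Frattini subgroup (the empty family intersects to A). *)
Definition alpha A : nat :=
  \big[minn/#|{set {set gT}}|]_(S : {set {set gT}} |
      [forall M in S, maximal M A] && (A :&: \bigcap_(M in S) M == 'Phi(A)))
    #|S|.

Definition weakly_minmax A : Prop :=
  MinInt A = alpha A /\ MaxInt A = alpha A.

End MaxInt.

From mathcomp Require Import all_boot all_order all_fingroup all_solvable.
Set Implicit Arguments. Unset Strict Implicit. Unset Printing Implicit Defensive.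
Local Open Scope group_scope.

(* In an unrefinable chain of M(A), each member Y other than Phi(A) is cut
   down to the next member below it by a single maximal subgroup.  Hence Y
   meets down to Phi(A) with as many maximal subgroups as there are members
   of the chain strictly below Y, and every unrefinable chain has length at
   least alpha(A).
   Conversely, pull an unrefinable chain C of M(G/N) back to G: it passes
   through N, the preimage of Phi(G/N), and extends to an unrefinable chain
   E of G.  If d members of E lie strictly below N, then preimages of an
   optimal family for G/N, together with the d maximal subgroups attached to
   N in E, give alpha(G) <= alpha(G/N) + d, while #C + d <= #E <= MaxInt(G) + 1.
   Since MaxInt(G) = alpha(G), C has length at most alpha(G/N). *)

Lemma bigminn_le_cond (I : finType) (P : pred I) (F : I -> nat) d j :
  P j -> \big[minn/d]_(i | P i) F i <= F j.
Proof. by rewrite -minEnat -leEnat; exact: Order.TotalTheory.bigmin_le_cond. Qed.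

Lemma bigminn_attained (I : finType) (P : pred I) (F : I -> nat) d j :
    P j -> (forall i, P i -> F i <= d) ->
  exists2 i, P i & \big[minn/d]_(i | P i) F i = F i.
Proof.
move=> Pj leFd; rewrite -minEnat (Order.TotalTheory.bigmin_eq_arg d _ _ _ Pj) //.
by case: Order.TotalTheory.arg_minP => // i Pi _; exists i.
Qed.

Lemma leq_bigminn (I : finType) (P : pred I) (F : I -> nat) d m :
  m <= d -> (forall i, P i -> m <= F i) -> m <= \big[minn/d]_(i | P i) F i.
Proof.
move=> le_md le_mF; apply: (big_ind (fun x => m <= x)) => // x y.
by rewrite leq_min => -> ->.
Qed.

Section MaximalIntersections.
Variable gT : finGroupType.
Implicit Types (A : {group gT}) (B M X Y : {set gT}) (S : {set {set gT}}).

Lemma maximal_group_set M B : maximal M B -> group_set M.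
Proof. by case/maxsetP => /andP[]. Qed.

Lemma maximal_sub M B : maximal M B -> M \subset B.
Proof.
move=> maxM; exact: proper_sub (maxgroupp (G := Group (maximal_group_set maxM)) maxM).
Qed.

Lemma Phi_sub_maximal A M : maximal M A -> 'Phi(A) \subset M.
Proof. by move=> maxM; exact: (Phi_sub_max (M := Group (maximal_group_set maxM))). Qed.

Lemma bigcap_maximal_sub B S :
  [forall M in S, maximal M B] -> S != set0 -> \bigcap_(M in S) M \subset B.
Proof.
move=> /forall_inP maxS /set0Pn[M SM].
exact: subset_trans (bigcap_inf _ SM) (maximal_sub (maxS _ SM)).
Qed.

Lemma Frattini_bigcap_maximal A :
  A :&: \bigcap_(M in [set M | maximal M A]) M = 'Phi(A).
Proof.
apply/eqP; rewrite eqEsubset subsetI Phi_sub /=; apply/andP; split.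
  apply/bigcapsP => H /orP[/eqP-> | maxH]; first exact: subsetIl.
  by rewrite (subset_trans (subsetIr _ _)) // bigcap_inf ?inE.
by apply/bigcapsP => M; rewrite inE; exact: Phi_sub_maximal.
Qed.

Lemma MposetP B X :
  reflect (exists2 S : {set {set gT}},
             [forall M in S, maximal M B] & X = B :&: \bigcap_(M in S) M)
          (X \in Mposet B).
Proof.
rewrite inE; apply: (iffP orP) => [[/eqP-> | ] | [S maxS ->]].
- by exists set0; [apply/forall_inP => M; rewrite inE | rewrite big_set0 setIT].
- case/existsP => S /and3P[S0 maxS /eqP->]; exists S => //.
  by apply/esym/setIidPr; exact: bigcap_maximal_sub.
have [-> | S0] := eqVneq S set0; first by left; rewrite big_set0 setIT.
right; apply/existsP; exists S; rewrite S0 maxS /=.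
by apply/eqP/setIidPr; exact: bigcap_maximal_sub.
Qed.

Lemma Mposet_sub B X : X \in Mposet B -> X \subset B.
Proof. by case/MposetP => S _ ->; exact: subsetIl. Qed.

Lemma Phi_sub_Mposet A X : X \in Mposet A -> 'Phi(A) \subset X.
Proof.
case/MposetP => S /forall_inP maxS ->; rewrite subsetI Phi_sub.
by apply/bigcapsP => M SM; exact: Phi_sub_maximal (maxS _ SM).
Qed.

Lemma Phi_Mposet A : 'Phi(A) \in Mposet A.
Proof.
apply/MposetP; exists [set M | maximal M A]; last by rewrite Frattini_bigcap_maximal.
by apply/forall_inP => M; rewrite inE.
Qed.

Lemma Mposet_setI B X M : X \in Mposet B -> maximal M B -> X :&: M \in Mposet B.
Proof.
case/MposetP => S /forall_inP maxS -> maxM; apply/MposetP; exists (M |: S).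
  by apply/forall_inP => K; rewrite !inE => /predU1P[-> | /maxS].
by rewrite bigcap_setU big_set1 setIA setIAC.
Qed.

Lemma alpha_le A (S : {set {set gT}}) :
  [forall M in S, maximal M A] -> A :&: \bigcap_(M in S) M = 'Phi(A) ->
  alpha A <= #|S|.
Proof. by move=> maxS defPhi; apply: bigminn_le_cond; rewrite maxS defPhi eqxx. Qed.

Lemma alpha_attained A : exists2 S : {set {set gT}},
  [forall M in S, maximal M A] & A :&: \bigcap_(M in S) M = 'Phi(A) /\ alpha A = #|S|.
Proof.
have [S /andP[maxS /eqP defPhi] ->] : exists2 S : {set {set gT}},
    [forall M in S, maximal M A] && (A :&: \bigcap_(M in S) M == 'Phi(A)) &
    alpha A = #|S|.
  apply: (bigminn_attained (j := [set M | maximal M A])) => [|S _].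
    rewrite Frattini_bigcap_maximal eqxx andbT.
    by apply/forall_inP => M; rewrite inE.
  by rewrite (leq_trans (max_card _)) // (leq_card _ (@set1_inj _)).
by exists S.
Qed.

End MaximalIntersections.

Section Unrefinable.
Variables (gT : finGroupType) (A : {group gT}) (C : {set {set gT}}).
Hypothesis unrefC : unrefinable A C.

Lemma unrefinable_Mchain : Mchain A C.
Proof. by case/andP: unrefC. Qed.

Lemma unrefinable_sub : C \subset Mposet A.
Proof. by case/andP: unrefinable_Mchain. Qed.

Lemma unrefinable_total H K : H \in C -> K \in C -> (H \subset K) || (K \subset H).
Proof.
case/andP: unrefC => /andP[_ /forall_inP totC] _ CH CK.
exact: forall_inP (totC _ CH) _ CK.
Qed.

Lemma unrefinable_mem H :
    H \in Mposet A -> {in C, forall K : {set gT}, (H \subset K) || (K \subset H)} ->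
  H \in C.
Proof.
case/andP: unrefC => _ /forall_inP maxC MH cmpH.
by apply: implyP (maxC H MH) _; apply/forall_inP.
Qed.

Lemma Phi_in_unrefinable : 'Phi(A) \in C.
Proof.
apply: unrefinable_mem (Phi_Mposet A) _ => K CK.
by rewrite Phi_sub_Mposet // (subsetP unrefinable_sub).
Qed.

Lemma group_in_unrefinable : gval A \in C.
Proof.
apply: unrefinable_mem _ _ => [|K CK]; first by rewrite inE eqxx.
by rewrite (Mposet_sub (subsetP unrefinable_sub _ CK)) orbT.
Qed.

Lemma unrefinable_predecessor Y : Y \in C -> 'Phi(A) \proper Y ->
  exists2 Z, Z \in C &
    Z \proper Y /\ {in C, forall K : {set gT}, K \proper Y -> K \subset Z}.
Proof.
move=> CY ltPhiY.
have DPhi : 'Phi(A) \in [set X in C | X \proper Y] by rewrite inE Phi_in_unrefinable.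
have [Z DZ maxZ] := arg_maxnP (fun X : {set gT} => #|X|) DPhi.
have: Z \in [set X in C | X \proper Y] := DZ.
rewrite inE => /andP[CZ ltZY]; exists Z => //; split => // K CK ltKY.
case/orP: (unrefinable_total CZ CK) => // sZK.
have DK : K \in [set X in C | X \proper Y] by rewrite inE CK.
have /eqP<- : Z == K by rewrite eqEcard sZK; exact: maxZ.
exact: subxx.
Qed.

(* The predecessor Z of Y is cut out of Y by one of the maximal subgroups
   defining Z; then Y :&: M lies between Z and Y, so it is in C. *)
Lemma unrefinable_meet_maximal Y : Y \in C -> Y != 'Phi(A) ->
  exists2 M, maximal M A & (Y :&: M \in C) && (Y :&: M \proper Y).
Proof.
move=> CY neYPhi; have MY := subsetP unrefinable_sub _ CY.
have ltPhiY : 'Phi(A) \proper Y by rewrite properEneq eq_sym neYPhi Phi_sub_Mposet.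
have [Z CZ [ltZY predZ]] := unrefinable_predecessor CY ltPhiY.
have /MposetP[S /forall_inP maxS defZ] := subsetP unrefinable_sub _ CZ.
have [M SM notsYM] : exists2 M, M \in S & ~~ (Y \subset M).
  apply/forall_inPn; apply: contra (proper_subn ltZY) => /forall_inP sYS.
  by rewrite defZ subsetI (Mposet_sub MY); apply/bigcapsP.
exists M; first exact: maxS.
have sZYM : Z \subset Y :&: M.
  by rewrite subsetI (proper_sub ltZY) defZ (subset_trans (subsetIr _ _)) ?bigcap_inf.
have ltYMY : Y :&: M \proper Y.
  by rewrite properEneq subsetIl andbT; apply: contraNneq notsYM => <-; exact: subsetIr.
rewrite ltYMY andbT; apply: unrefinable_mem (Mposet_setI MY (maxS _ SM)) _ => K CK.
case/orP: (unrefinable_total CY CK) => [sYK | sKY].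
  by rewrite (subset_trans (subsetIl _ _) sYK).
have [-> | neKY] := eqVneq K Y; first by rewrite subsetIl.
by rewrite (subset_trans (predZ K CK _) sZYM) ?orbT // properEneq neKY.
Qed.

Lemma unrefinable_family Y : Y \in C ->
  exists2 S : {set {set gT}}, [forall M in S, maximal M A] &
    Y :&: \bigcap_(M in S) M = 'Phi(A) /\ #|S| <= #|[set X in C | X \proper Y]|.
Proof.
have [n] := ubnP #|[set X in C | X \proper Y]|; elim: n Y => // n IHn Y.
rewrite ltnS => leYn CY; have [-> | neYPhi] := eqVneq Y 'Phi(A).
  exists set0; first by apply/forall_inP => M; rewrite inE.
  by rewrite big_set0 setIT cards0.
have [M maxM /andP[CYM ltYMY]] := unrefinable_meet_maximal CY neYPhi.
have ltD : [set X in C | X \proper Y :&: M] \proper [set X in C | X \proper Y].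
  apply/properP; split.
    by apply/subsetP => X; rewrite !inE => /andP[-> /proper_trans->].
  by exists (Y :&: M); rewrite !inE ?CYM ?ltYMY ?properxx.
have [S /forall_inP maxS [defPhi leS]] := IHn _ (leq_trans (proper_card ltD) leYn) CYM.
exists (M |: S).
  by apply/forall_inP => K; rewrite !inE => /predU1P[-> | /maxS].
split; first by rewrite bigcap_setU big_set1 setIA.
by rewrite cardsU1 (leq_trans (leq_add (leq_b1 _) leS) (proper_card ltD)).
Qed.

Lemma alpha_le_chain_length : alpha A <= chain_length C.
Proof.
have [S maxS [defPhi leS]] := unrefinable_family group_in_unrefinable.
apply: leq_trans (alpha_le maxS defPhi) (leq_trans leS _).
rewrite /chain_length (cardsD1 (gval A) C) group_in_unrefinable subset_leq_card //.
by apply/subsetP => X; rewrite !inE properEneq => /andP[-> /andP[-> _]].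
Qed.

End Unrefinable.

Section Existence.
Variable gT : finGroupType.
Implicit Types (A : {group gT}) (B : {set gT}).

Lemma Mchain_unrefinable B (C : {set {set gT}}) :
  Mchain B C -> exists2 E, unrefinable B E & C \subset E.
Proof.
move=> chC; have [E /maxsetP[chE maxE] sCE] := maxset_exists chC.
exists E => //; rewrite /unrefinable chE /=.
apply/forall_inP => H MH; apply/implyP => /forall_inP cmpH.
suff chHE : Mchain B (H |: E) by rewrite -(maxE _ chHE (subsetUr _ _)) setU11.
case/andP: chE => sEM /forall_inP totE.
rewrite /Mchain subUset sub1set MH sEM /=.
apply/forall_inP => X; rewrite !inE => /predU1P[-> | EX];
  apply/forall_inP => K; rewrite !inE => /predU1P[-> | EK].
- by rewrite subxx.
- exact: cmpH.
- by rewrite orbC cmpH.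
- exact: forall_inP (totE _ EX) _ EK.
Qed.

Lemma unrefinable_exists B : exists C, unrefinable B C.
Proof.
have chain0 : Mchain B set0.
  by rewrite /Mchain sub0set; apply/forall_inP => H; rewrite inE.
by have [C unrefC _] := Mchain_unrefinable chain0; exists C.
Qed.

Lemma chain_lengths_weakly_minmax A :
  (forall C, unrefinable A C -> chain_length C = alpha A) -> weakly_minmax A.
Proof.
move=> lenA; have [C0 unrefC0] := unrefinable_exists A.
split; apply/eqP; rewrite eqn_leq.
  rewrite -{1}(lenA _ unrefC0) bigminn_le_cond //= leq_bigminn // => [|C /lenA->//].
  by rewrite -(lenA _ unrefC0) (leq_trans (leq_pred _)) ?max_card.
apply/andP; split; first by apply/bigmax_leqP => C /lenA->.
by rewrite -(lenA _ unrefC0) (leq_bigmax_cond _ unrefC0).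
Qed.

End Existence.

Section Quotient.
Variables (gT : finGroupType) (G N : {group gT}).
Hypothesis nsNG : N <| G.
Implicit Types (M X : {set coset_of N}) (S C : {set {set coset_of N}}).

Lemma cosetpre_inj : injective (fun X => coset N @*^-1 X).
Proof. exact: can_inj (@cosetpreK _ N). Qed.

Lemma cosetpre_maximal_set M : maximal M (G / N) -> maximal (coset N @*^-1 M) G.
Proof.
move=> maxM; have := @cosetpre_maximal _ N (Group (maximal_group_set maxM)) (G / N)%G.
by rewrite /= quotientGK // => ->.
Qed.

Lemma quotient_maximal_set (M : {set gT}) :
  maximal M G -> N \subset M -> maximal (M / N) (G / N).
Proof.
move=> maxM sNM; pose H := Group (maximal_group_set maxM).
have nsNH : N <| H := @normalS _ G H N sNM (maximal_sub maxM) nsNG.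
by rewrite (quotient_maximal nsNH nsNG).
Qed.

Lemma cosetpre_bigcap S :
  coset N @*^-1 (\bigcap_(M in S) M) = 'N(N) :&: \bigcap_(M in S) coset N @*^-1 M.
Proof.
elim/big_rec2: _ => [|M X Y _ preX]; first by rewrite morphpreT setIT.
by rewrite morphpreI preX setICA.
Qed.

Lemma cosetpre_quotient_bigcap S :
  coset N @*^-1 (G / N :&: \bigcap_(M in S) M) = G :&: \bigcap_(M in S) coset N @*^-1 M.
Proof.
by rewrite morphpreI quotientGK // cosetpre_bigcap setIA (setIidPl (normal_norm nsNG)).
Qed.

Lemma bigcap_cosetpre S :
  \bigcap_(K in [set coset N @*^-1 M | M in S]) K = \bigcap_(M in S) coset N @*^-1 M.
Proof. by rewrite big_imset //; apply: in2W cosetpre_inj. Qed.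

Lemma cosetpre_Mposet X : X \in Mposet (G / N) -> coset N @*^-1 X \in Mposet G.
Proof.
case/MposetP => S /forall_inP maxS ->; apply/MposetP.
exists [set coset N @*^-1 M | M in S].
  by apply/forall_inP => _ /imsetP[M SM ->]; exact: cosetpre_maximal_set (maxS _ SM).
by rewrite bigcap_cosetpre cosetpre_quotient_bigcap.
Qed.

Lemma Mchain_cosetpre C :
  Mchain (G / N) C -> Mchain G [set coset N @*^-1 X | X in C].
Proof.
case/andP => sCM /forall_inP totC; apply/andP; split.
  by apply/subsetP => _ /imsetP[X CX ->]; exact: cosetpre_Mposet (subsetP sCM _ CX).
apply/forall_inP => _ /imsetP[X CX ->]; apply/forall_inP => _ /imsetP[Y CY ->].
by rewrite !cosetpreSK; exact: forall_inP (totC _ CX) _ CY.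
Qed.

Hypothesis maxintN : maxint G N.

Lemma cosetpre_Phi : coset N @*^-1 'Phi(G / N) = N.
Proof.
case/existsP: maxintN => T /and3P[_ /forall_inP maxT /eqP defN].
apply/eqP; rewrite eqEsubset sub_cosetpre andbT.
suff: coset N @*^-1 'Phi(G / N) \subset \bigcap_(M in T) M by rewrite -defN.
apply/bigcapsP => M TM; have maxM := maxT _ TM.
have sNM : N \subset M by rewrite defN bigcap_inf.
pose H := Group (maximal_group_set maxM).
have nsNM : N <| H := @normalS _ G H N sNM (maximal_sub maxM) nsNG.
have -> : M = coset N @*^-1 (M / N) := esym (quotientGK nsNM).
rewrite morphpreS //.
exact: Phi_sub_maximal (quotient_maximal_set maxM sNM).
Qed.

Lemma alpha_le_quotient E : unrefinable G E -> gval N \in E ->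
  alpha G <= alpha (G / N) + #|[set X in E | X \proper N]|.
Proof.
move=> unrefE EN.
have [S /forall_inP maxS [defPhiQ ->]] := alpha_attained (G / N)%G.
have [L /forall_inP maxL [defPhi leL]] := unrefinable_family unrefE EN.
pose S' := [set coset N @*^-1 M | M in S].
apply: leq_trans (alpha_le (A := G) (S := S' :|: L) _ _) _.
- apply/forall_inP => K; rewrite inE => /orP[/imsetP[M SM ->] | /maxL //].
  exact: cosetpre_maximal_set (maxS _ SM).
- rewrite bigcap_setU setIA bigcap_cosetpre -cosetpre_quotient_bigcap.
  by rewrite defPhiQ cosetpre_Phi.
exact: leq_trans (leq_card_setU S' L).1 (leq_add (leq_imset_card _ _) leL).
Qed.

Lemma quotient_chain_length_bound C : unrefinable (G / N) C ->
  chain_length C + alpha G <= alpha (G / N) + MaxInt G.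
Proof.
move=> unrefC; pose C' := [set coset N @*^-1 X | X in C].
have [E unrefE sC'E] := Mchain_unrefinable (Mchain_cosetpre (unrefinable_Mchain unrefC)).
have EN : gval N \in E.
  have := imset_f (fun X => coset N @*^-1 X) (Phi_in_unrefinable unrefC).
  by rewrite cosetpre_Phi => /(subsetP sC'E).
pose D := [set X in E | X \proper N].
have disjC'D : [disjoint C' & D].
  rewrite disjoint_subset; apply/subsetP => _ /imsetP[X CX ->].
  have := morphpreS (coset N) (Phi_sub_Mposet (subsetP (unrefinable_sub unrefC) _ CX)).
  by rewrite cosetpre_Phi !inE properE => ->; rewrite !andbF.
have leCD : #|C| + #|D| <= #|E|.
  have cardC' : #|C'| = #|C| := card_imset _ cosetpre_inj.
  have /eqP<- : #|C' :|: D| == #|C| + #|D| by rewrite -cardC' (leq_card_setU C' D).2.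
  rewrite subset_leq_card // subUset sC'E.
  by apply/subsetP => X; rewrite inE => /andP[].
have C_gt0 : 0 < #|C| by apply/card_gt0P; exists 'Phi(G / N); exact: Phi_in_unrefinable.
rewrite -(prednK C_gt0) addSn in leCD.
rewrite /chain_length (leq_trans (leq_add (leqnn _) (alpha_le_quotient unrefE EN))) //.
rewrite addnCA leq_add2l (leq_trans _ (leq_bigmax_cond _ unrefE)) //.
by rewrite /chain_length -ltnS (ltn_predK leCD).
Qed.

End Quotient.

Unset Implicit Arguments.

Theorem mainTheorem6 (gT : finGroupType) (G N : {group gT}) :
  weakly_minmax G -> N <| G -> maxint G N -> weakly_minmax (G / N).
Proof.
move=> [_ MaxIntG] nsNG maxintN; apply: chain_lengths_weakly_minmax => C unrefC.
apply/eqP; rewrite eqn_leq (alpha_le_chain_length unrefC) andbT.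
by have := quotient_chain_length_bound nsNG maxintN unrefC; rewrite MaxIntG leq_add2r.
Qed.
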